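(* Let $N \ge 1$, $\tau > 0$, $\beta > 0$, $\eta > 0$, and let $I_1, \dots, I_N > 0$. Consider the dynamical system in the variables $R_1,\dots,R_N, G$: \[ \tau \frac{dR_i}{dt} = -R_i + \frac{\beta R_i + I_i}{\eta + G}, \quad i = 1,\dots,N, \qquad \tau \frac{dG}{dt} = -G + \sum_{j=1}^N R_j . \] Let $T = \sum_{j=1}^N I_j$ and define \[ G^* = \frac{(\beta - \eta) + \sqrt{(\eta-\beta)^2 + 4T}}{2}, \qquad R_i^* = \frac{I_i}{\eta - \beta + G^*}, \quad i=1,\dots,N. \] Then $(R_1^*,\dots,R_N^*,G^* )$ is the unique steady state of the system with $G^*>0$, and it is an attractor: every eigenvalue of the Jacobian of the system at this steady state has strictly negative real part, so the steady state is locally asymptotically stable.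
   Context: Here $R_i$ are firing rates of excitatory units, $G$ is the activity of a single inhibitory pool, $I_i$ are external inputs, $\beta$ is the self-excitation strength, $\eta$ is a semi-saturation constant and $\tau$ is a time constant. A steady state is a point where all time derivatives vanish. *)

From HB Require Import structures.
From mathcomp Require Import all_boot all_order all_algebra.
From mathcomp Require Import all_classical all_reals all_analysis.
From mathcomp Require complex.
Import complex.ComplexField.
Set Implicit Arguments. Unset Strict Implicit. Unset Printing Implicit Defensive.
Import Order.TTheory GRing.Theory Num.Theory.
Local Open Scope ring_scope.

(* State vector x : 'rV[R]_(N.+1).  Coordinate (lift ord_max i), i : 'I_N,
   is R_i ; coordinate ord_max is G. *)
Definition Rc (R : realType) (N : nat) (x : 'rV[R]_(N.+1)) (i : 'I_N) : R :=
  x 0 (lift ord_max i).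
Definition Gc (R : realType) (N : nat) (x : 'rV[R]_(N.+1)) : R := x 0 ord_max.

Definition field (R : realType) (N : nat) (tau beta eta : R) (I : 'I_N -> R)
    (x : 'rV[R]_(N.+1)) : 'rV[R]_(N.+1) :=
  \row_(k < N.+1)
    match unlift ord_max k with
    | Some i => (- Rc x i + (beta * Rc x i + I i) / (eta + Gc x)) / tau
    | None => (- Gc x + \sum_(j < N) Rc x j) / tau
    end.

Definition steady_state (R : realType) (N : nat) (tau beta eta : R)
    (I : 'I_N -> R) (x : 'rV[R]_(N.+1)) : Prop :=
  field tau beta eta I x = 0.

Definition Gstar (R : realType) (N : nat) (beta eta : R) (I : 'I_N -> R) : R :=
  ((beta - eta) + Num.sqrt ((eta - beta) ^+ 2 + 4 * \sum_(j < N) I j)) / 2.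

Definition xstar (R : realType) (N : nat) (beta eta : R) (I : 'I_N -> R)
    : 'rV[R]_(N.+1) :=
  \row_(k < N.+1)
    match unlift ord_max k with
    | Some i => I i / (eta - beta + Gstar beta eta I)
    | None => Gstar beta eta I
    end.

Definition complex_eigenvalue (R : realType) (n : nat) (A : 'M[R]_n)
    (lam : complex.complex R) : bool :=
  eigenvalue (map_mx (fun r : R => complex.Complex r 0) A) lam.

From HB Require Import structures.
From mathcomp Require Import all_boot all_order all_algebra.
From mathcomp Require Import all_classical all_reals all_analysis.
From mathcomp Require Import ring lra.
From mathcomp Require Import complex.
Import complex.ComplexField.
Import Order.TTheory GRing.Theory Num.Theory.
Import numFieldNormedType.Exports.
Set Implicit Arguments. Unset Strict Implicit. Unset Printing Implicit Defensive.
Local Open Scope ring_scope.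
Local Open Scope complex_scope.

(* A steady state with eta + G <> 0 satisfies R_i (eta - beta + G) = I_i and
   G = sum_j R_j; multiplying the latter by eta - beta + G gives
   G (eta - beta + G) = T, whose only positive root is G*.

   At a point with R >= 0 and G > beta - eta, tau times the Jacobian acts on
   the R-coordinates as the scalar a = beta / (eta + G) - 1 < 0, coupled to G
   through weights rho_i >= 0.  For an eigenvalue mu of this matrix, either
   mu = a, or the G-coordinate of the eigenvector is nonzero and summing the
   R-equations gives (mu - a) (mu + 1) + sum_i rho_i = 0, a monic quadratic
   with positive coefficients, whose roots have negative real part. *)

Section RowDifferential.
Variable R : realType.

Lemma is_diff_coord n m (a : 'M[R]_(n, m)) (i : 'I_n) (j : 'I_m) :
  is_diff a (fun y : 'M[R]_(n, m) => y i j) (fun y => y i j).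
Proof.
have @f : {linear 'M[R]_(n, m) -> R}.
  by exists (fun N : 'M[R]_(_, _) => N i j); do 2![eexists]; do ?[constructor];
     rewrite ?mxE// => ? *; rewrite ?mxE//; move=> ?; rewrite !mxE.
rewrite (_ : (fun _ => _) = f) //.
apply: DiffDef; first exact/linear_differentiable/coord_continuous.
by rewrite diff_lin //; apply: coord_continuous.
Qed.

Lemma is_diff_sum (V W : normedModType R) n (F dF : 'I_n -> V -> W) a :
  (forall i, is_diff a (F i) (dF i)) ->
  is_diff a (\sum_(i < n) F i) (\sum_(i < n) dF i).
Proof.
move=> dFi; elim/big_rec2: _ => [|i f df _ dfa]; first exact: is_diff_cst.
exact: is_diffD.
Qed.

Lemma is_diffV (V : normedModType R) (f df : V -> R) a :
  is_diff a f df -> f a != 0 ->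
  is_diff a (fun y => (f y)^-1) (- (f a) ^- 2 *: df).
Proof.
move=> dfa fa_neq0; apply: DiffDef; first exact: differentiableV.
by rewrite diffV // diff_val.
Qed.

Lemma differentiable_row (V : normedModType R) m (f : V -> 'rV[R]_m) a :
  (forall k, differentiable (fun y => f y 0 k) a) -> differentiable f a.
Proof.
move=> dfk; have -> : f = \sum_(k < m) (fun y => f y 0 k *: delta_mx 0 k).
  by apply/funext => y; rewrite fct_sumE; exact: row_sum_delta.
by apply: differentiable_sum => k; exact: differentiableZl.
Qed.

Lemma diff_row_coord (V : normedModType R) m (f : V -> 'rV[R]_m) a v k :
  differentiable f a -> 'd f a v 0 k = 'd (fun y => f y 0 k) a v.
Proof.
move=> dfa; have dcoord := is_diff_coord (f a) 0 k.
rewrite (_ : (fun y => f y 0 k) = (fun z : 'rV[R]_m => z 0 k) \o f) //.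
by rewrite (diff_comp dfa ex_diff) /= diff_val.
Qed.

Lemma mulmx_jacobian n m (f : 'rV[R]_n -> 'rV[R]_m) a w k :
  differentiable f a -> (w *m 'J f a) 0 k = 'd (fun y => f y 0 k) a w.
Proof. by move=> dfa; rewrite /jacobian mul_rV_lin1 diff_row_coord. Qed.

End RowDifferential.

Lemma quadratic_root_Re_lt0 (R : rcfType) (b c : R) (z : R[i]) :
  0 < b -> 0 < c -> z ^+ 2 + b%:C * z + c%:C = 0 -> complex.Re z < 0.
Proof.
case: z => x y b_gt0 c_gt0 /eqP; rewrite expr2 eq_complex /=.
move=> /andP[/eqP reE /eqP imE] /=; rewrite ltNge; apply/negP => x_ge0.
have y0 : y = 0.
  have : y * (2 * x + b) = 0 by rewrite -imE; ring.
  by move/eqP; rewrite mulf_eq0 => /orP[/eqP // | /eqP]; lra.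
by rewrite y0 in reE; nra.
Qed.

Lemma Re_real_mul (R : rcfType) (t : R) (z : R[i]) :
  complex.Re (t%:C * z) = t * complex.Re z.
Proof. by case: z => x y /=; ring. Qed.

Section Linearization.
Variables (K : comPzRingType) (N : nat).

Definition linearization_mx (a : K) (r : 'I_N -> K) : 'M[K]_N.+1 :=
  \matrix_(j, k)
    match unlift ord_max k with
    | Some i => a * (j == lift ord_max i)%:R - r i * (j == ord_max)%:R
    | None => (j != ord_max)%:R - (j == ord_max)%:R
    end.

Lemma sumr_mul_delta n (w : 'I_n -> K) l : \sum_j w j * (j == l)%:R = w l.
Proof.
rewrite (bigD1 l) //= eqxx mulr1 big1 ?addr0 // => j /negbTE->.
by rewrite mulr0.
Qed.

Variables (a : K) (r : 'I_N -> K) (w : 'rV[K]_N.+1).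

Lemma linearization_mx_lift i :
  (w *m linearization_mx a r) 0 (lift ord_max i) =
  a * w 0 (lift ord_max i) - r i * w 0 ord_max.
Proof.
rewrite mxE; under eq_bigr do rewrite mxE liftK mulrBr mulrCA (mulrCA _ (r i)).
by rewrite sumrB -!mulr_sumr !sumr_mul_delta.
Qed.

Lemma linearization_mx_max :
  (w *m linearization_mx a r) 0 ord_max =
  \sum_i w 0 (lift ord_max i) - w 0 ord_max.
Proof.
rewrite mxE (bigD1_ord ord_max) //= !mxE unlift_none eqxx sub0r mulrN1 addrC.
congr (_ - _); apply: eq_bigr => i _.
by rewrite !mxE unlift_none eq_sym (negbTE (neq_lift _ _)) subr0 mulr1.
Qed.

End Linearization.

Lemma map_linearization_mx (K K' : comPzRingType) (f : {rmorphism K -> K'})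
    N (a : K) (r : 'I_N -> K) :
  map_mx f (linearization_mx a r) = linearization_mx (f a) (f \o r).
Proof.
apply/matrixP => j k; rewrite !mxE.
by case: unlift => [i|]; rewrite rmorphB ?rmorphM !rmorph_nat.
Qed.

Lemma linearization_mx_eigen (K : fieldType) N (a : K) (r : 'I_N -> K) mu
    (v : 'rV[K]_N.+1) :
  v != 0 -> v *m linearization_mx a r = mu *: v ->
  mu = a \/ (mu - a) * (mu + 1) + \sum_i r i = 0.
Proof.
move=> v_neq0 /rowP eig.
have eigR i : (mu - a) * v 0 (lift ord_max i) = - (r i * v 0 ord_max).
  have := eig (lift ord_max i); rewrite linearization_mx_lift mxE => E.
  by rewrite mulrBl -E; ring.
have eigG : \sum_i v 0 (lift ord_max i) = (mu + 1) * v 0 ord_max.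
  have := eig ord_max; rewrite linearization_mx_max mxE => E.
  by rewrite mulrDl -E; ring.
have [-> | mu_neq_a] := eqVneq mu a; [by left | right].
have mu_a_neq0 : mu - a != 0 by rewrite subr_eq0.
have vG_neq0 : v 0 ord_max != 0.
  apply: contraNneq v_neq0 => vG0; apply/eqP/rowP => k; rewrite mxE.
  case: (unliftP ord_max k) => [i -> | -> //].
  by apply: (mulfI mu_a_neq0); rewrite eigR vG0 !mulr0 oppr0.
apply: (mulIf vG_neq0); rewrite mul0r mulrDl -mulrA -eigG mulr_sumr mulr_suml.
by rewrite -big_split big1 // => i _ /=; rewrite eigR addNr.
Qed.

Section Model.
Variables (R : realType) (N : nat) (tau beta eta : R) (I : 'I_N -> R).

Local Notation F := (field tau beta eta I).
Local Notation T := (\sum_j I j).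
Local Notation Gs := (Gstar beta eta I).
Local Notation xs := (xstar beta eta I).

Lemma sqrt_discriminant_gt : 0 < T ->
  `|eta - beta| < Num.sqrt ((eta - beta) ^+ 2 + 4 * T).
Proof.
move=> T_gt0; have T4_gt0 : 0 < 4 * T by rewrite mulr_gt0.
by rewrite -sqrtr_sqr ltr_sqrt ?ltrDl // ltr_wpDl ?sqr_ge0.
Qed.

Lemma Gstar_gt0 : 0 < T -> 0 < Gs.
Proof.
by move=> /sqrt_discriminant_gt; rewrite /Gstar ltr_norml => /andP[? ?]; lra.
Qed.

Lemma Gstar_gt : 0 < T -> beta - eta < Gs.
Proof.
by move=> /sqrt_discriminant_gt; rewrite /Gstar ltr_norml => /andP[? ?]; lra.
Qed.

Lemma Gstar_root : 0 <= T -> Gs * (eta - beta + Gs) = T.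
Proof.
move=> T_ge0; have disc_ge0 : 0 <= (eta - beta) ^+ 2 + 4 * T.
  by rewrite addr_ge0 ?sqr_ge0 ?mulr_ge0.
have := sqr_sqrtr disc_ge0; rewrite /Gstar; set s := Num.sqrt _ => s2.
rewrite (_ : T = (s ^+ 2 - (eta - beta) ^+ 2) / 4); first by field.
by rewrite s2; field.
Qed.

Lemma Gstar_unique G : 0 < T -> 0 < G -> G * (eta - beta + G) = T -> G = Gs.
Proof.
move=> T_gt0 G_gt0 GT; have Gs_gt := Gstar_gt T_gt0.
have : (G - Gs) * (G + (eta - beta + Gs)) = 0.
  by rewrite (_ : _ * _ = G * (eta - beta + G) - Gs * (eta - beta + Gs));
    [rewrite GT Gstar_root ?subrr ?ltW | ring].
by move/eqP; rewrite mulf_eq0 subr_eq0 => /orP[/eqP // | /eqP]; lra.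
Qed.

Lemma Rc_xstar i : Rc xs i = I i / (eta - beta + Gs).
Proof. by rewrite /Rc mxE liftK. Qed.

Lemma Gc_xstar : Gc xs = Gs.
Proof. by rewrite /Gc mxE unlift_none. Qed.

Lemma field_max x : F x 0 ord_max = (\sum_j Rc x j - Gc x) / tau.
Proof. by rewrite mxE unlift_none addrC. Qed.

Hypotheses (tau_gt0 : 0 < tau) (beta_gt0 : 0 < beta) (eta_gt0 : 0 < eta).

Lemma field_lift x i : eta + Gc x != 0 ->
  F x 0 (lift ord_max i) =
  (I i - Rc x i * (eta - beta + Gc x)) / ((eta + Gc x) * tau).
Proof. by move=> D_neq0; rewrite mxE liftK; field; rewrite D_neq0 gt_eqF. Qed.

Lemma steady_stateP x : eta + Gc x != 0 ->
  steady_state tau beta eta I x <->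
  (forall i, Rc x i * (eta - beta + Gc x) = I i) /\ Gc x = \sum_j Rc x j.
Proof.
move=> D_neq0; have tau_neq0 : tau != 0 by rewrite gt_eqF.
have divf_eq0 (a b : R) : b != 0 -> (a / b == 0) = (a == 0).
  by move=> b_neq0; rewrite mulf_eq0 invr_eq0 (negbTE b_neq0) orbF.
split=> [/rowP ss | [ssR ssG]].
  split=> [i | ]; [have := ss (lift ord_max i) | have := ss ord_max].
    rewrite field_lift // mxE => /eqP; rewrite divf_eq0 ?mulf_neq0 // subr_eq0.
    by move=> /eqP.
  by rewrite field_max mxE => /eqP; rewrite divf_eq0 // subr_eq0 => /eqP.
apply/rowP => k; rewrite [RHS]mxE; case: (unliftP ord_max k) => [i -> | ->].
  by rewrite field_lift // ssR subrr mul0r.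
by rewrite field_max ssG subrr mul0r.
Qed.

Lemma steady_state_xstar : 0 < T -> steady_state tau beta eta I xs.
Proof.
move=> T_gt0; have := Gstar_gt T_gt0 => Gs_gt.
have den_gt0 : 0 < eta - beta + Gs by lra.
have D_gt0 : 0 < eta + Gs by move: beta_gt0; lra.
apply/steady_stateP; rewrite Gc_xstar ?gt_eqF //.
split=> [i | ]; first by rewrite Rc_xstar divfK ?gt_eqF.
under eq_bigr do rewrite Rc_xstar.
by rewrite -mulr_suml -[in RHS](Gstar_root (ltW T_gt0)) mulfK ?gt_eqF.
Qed.

Lemma steady_state_unique x : 0 < T ->
  steady_state tau beta eta I x -> 0 < Gc x -> x = xs.
Proof.
move=> T_gt0 + G_gt0; have D_gt0 : 0 < eta + Gc x by move: eta_gt0; lra.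
move=> /(steady_stateP (lt0r_neq0 D_gt0)) [ssR ssG].
have GGs : Gc x = Gs.
  by apply: Gstar_unique => //; rewrite {1}ssG mulr_suml; apply: eq_bigr.
have den_gt0 : 0 < eta - beta + Gs by have := Gstar_gt T_gt0; lra.
apply/rowP => k; case: (unliftP ord_max k) => [i -> | ->]; last first.
  by rewrite -[LHS]/(Gc x) GGs -Gc_xstar.
by rewrite -[LHS]/(Rc x i) -[RHS]/(Rc xs i) Rc_xstar -(ssR i) GGs mulfK ?gt_eqF.
Qed.

Lemma is_diff_field_lift x i : eta + Gc x != 0 ->
  is_diff x (fun y => F y 0 (lift ord_max i))
    (fun v => (- Rc v i + beta * Rc v i / (eta + Gc x)
               - (beta * Rc x i + I i) * Gc v / (eta + Gc x) ^+ 2) / tau).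
Proof.
move=> D_neq0.
have dc : is_diff x (fun y => Rc y i) (fun y => Rc y i) by exact: is_diff_coord.
have dg : is_diff x (fun y => Gc y) (fun y => Gc y) by exact: is_diff_coord.
have dinv := is_diffV (is_diffD (is_diff_cst eta x) dg) D_neq0.
have := is_diffZ tau^-1 (is_diffD (is_diffN dc)
          (is_diffM (is_diffD (is_diffZ beta dc) (is_diff_cst (I i) x)) dinv)).
rewrite (_ : tau^-1 *: _ = fun y => F y 0 (lift ord_max i)); last first.
  by apply/funext => y; rewrite mxE liftK !fctE /cst /GRing.scale /= mulrC.
move=> dF; apply: is_diff_eq; apply/funext => v /=.
by rewrite /cst !fctE /GRing.scale /= !add0r !addr0; ring.
Qed.

Lemma is_diff_field_max x :
  is_diff x (fun y => F y 0 ord_max) (fun y => F y 0 ord_max).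
Proof.
have dg : is_diff x (fun y => Gc y) (fun y => Gc y) by exact: is_diff_coord.
have := is_diffZ tau^-1 (is_diffD (is_diffN dg)
          (is_diff_sum (fun j => is_diff_coord x 0 (lift ord_max j)))).
rewrite (_ : tau^-1 *: _ = fun y => F y 0 ord_max) //.
by apply/funext => y; rewrite mxE unlift_none /= fct_sumE mulrC.
Qed.

Lemma differentiable_field x : eta + Gc x != 0 -> differentiable F x.
Proof.
move=> D_neq0; apply: differentiable_row => k.
case: (unliftP ord_max k) => [i -> | ->].
  by have := is_diff_field_lift i D_neq0.
by have := is_diff_field_max x.
Qed.

Lemma jacobian_field x : eta + Gc x != 0 ->
  'J F x = tau^-1 *: linearization_mx (beta / (eta + Gc x) - 1)
                       (fun i => (beta * Rc x i + I i) / (eta + Gc x) ^+ 2).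
Proof.
move=> D_neq0; apply/row_matrixP => j; rewrite !rowE; apply/rowP => k.
set M := linearization_mx _ _.
(* The scaling in the statement is elaborated through another structure
   path than the one of [scalemxAr], which is thus only usable up to
   conversion. *)
have := congr1 (fun A : 'rV[R]_N.+1 => A 0 k)
  (scalemxAr tau^-1 (delta_mx 0 j : 'rV_N.+1) M).
rewrite /= mxE => scaleE; apply: etrans scaleE.
rewrite mulmx_jacobian; last exact: differentiable_field.
case: (unliftP ord_max k) => [i -> | ->].
  have dFi := is_diff_field_lift i D_neq0.
  by rewrite linearization_mx_lift diff_val /Rc /Gc; ring.
have dFG := is_diff_field_max x.
by rewrite linearization_mx_max diff_val field_max /Rc /Gc; ring.
Qed.

Hypothesis I_gt0 : forall i, 0 < I i.

Lemma jacobian_field_stable x : beta - eta < Gc x -> (forall i, 0 <= Rc x i) ->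
  forall lam, complex_eigenvalue ('J F x) lam -> complex.Re lam < 0.
Proof.
move=> G_gt R_ge0 lam; have D_gt0 : 0 < eta + Gc x by move: beta_gt0; lra.
pose a := beta / (eta + Gc x) - 1.
pose r i := (beta * Rc x i + I i) / (eta + Gc x) ^+ 2.
rewrite /complex_eigenvalue jacobian_field ?gt_eqF // -/a -/r.
have a_lt0 : a < 0.
  by rewrite /a subr_lt0 ltr_pdivrMr // mul1r; move: beta_gt0; lra.
have r_ge0 i : 0 <= r i.
  by rewrite /r divr_ge0 ?sqr_ge0 // addr_ge0 // ?mulr_ge0 // ltW.
move=> /eigenvalueP [v eig v_neq0].
have eigC :
    v *m linearization_mx a%:C (real_complex R \o r) = (tau%:C * lam) *: v.
  (* [eig] retyped so that [map_mxZ] applies; this holds by conversion. *)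
  have {}eig : v *m map_mx (real_complex R) (tau^-1 *: linearization_mx a r) =
               lam *: v := eig.
  rewrite map_mxZ map_linearization_mx -scalemxAr in eig.
  by rewrite -scalerA -eig scalerA -rmorphM mulfV ?gt_eqF // scale1r.
rewrite -(pmulr_rlt0 _ tau_gt0) -Re_real_mul.
have [-> // | char] := linearization_mx_eigen v_neq0 eigC.
have sum_r_ge0 : 0 <= \sum_i r i by exact: sumr_ge0.
apply: (@quadratic_root_Re_lt0 _ (1 - a) (\sum_i r i - a)); [lra | lra | ].
by rewrite -[RHS]char !rmorphB rmorph1 rmorph_sum; ring.
Qed.

End Model.

Theorem theorem2 (R : realType) (N : nat) (tau beta eta : R) (I : 'I_N -> R) :
  (1 <= N)%N -> 0 < tau -> 0 < beta -> 0 < eta -> (forall i, 0 < I i) ->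
  [/\ steady_state tau beta eta I (xstar beta eta I),
      0 < Gc (xstar beta eta I),
      (forall x : 'rV[R]_(N.+1),
          steady_state tau beta eta I x -> 0 < Gc x -> x = xstar beta eta I)
    & (forall lam : complex.complex R,
          complex_eigenvalue ('J (field tau beta eta I) (xstar beta eta I)) lam ->
          complex.Re lam < 0)].
Proof.
move=> N_gt0 tau_gt0 beta_gt0 eta_gt0 I_gt0.
have T_gt0 : 0 < \sum_j I j.
  rewrite (bigD1 (Ordinal N_gt0)) //= ltr_pwDl // sumr_ge0 // => i _.
  exact: ltW.
have den_gt0 : 0 < eta - beta + Gstar beta eta I.
  by have := Gstar_gt beta eta T_gt0; lra.
split.
- exact: steady_state_xstar.
- by rewrite Gc_xstar Gstar_gt0.
- by move=> x; exact: steady_state_unique.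
- apply: jacobian_field_stable => //; first by rewrite Gc_xstar Gstar_gt.
  by move=> i; rewrite Rc_xstar divr_ge0 ?ltW.
Qed.
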